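(* Assume the standing hypotheses (S) with $\lambda\ge0$, that $\nabla\phi^{\#}_{\rho_0}$ is $L$-Lipschitz on $\mathbb H$, and $\tau\le1/L$. Then for every $n\ge0$: (1) the energy is non-increasing: \[\phi^{\#}_{\rho_0}(X_{n+1}^\tau)+\frac\lambda2\|X_n^\tau-X_{n+1}^\tau\|^2_{\mathbb H}+\tau\Big(1-\frac{L\tau}2\Big)\|\nabla\phi^{\#}_{\rho_0}(X_{n+1}^\tau)\|^2_{\mathbb H}\le\phi^{\#}_{\rho_0}(X_n^\tau);\] (2) the gradient norm decays exponentially: \[\|\nabla\phi^{\#}_{\rho_0}(X_n^\tau)\|^2_{\mathbb H}\ge e^{2\lambda_{\tau,L}\tau}\|\nabla\phi^{\#}_{\rho_0}(X_{n+1}^\tau)\|^2_{\mathbb H},\qquad\lambda_{\tau,L}:=\frac{\log\big(1+\lambda\tau(2-L\tau)\big)}{2\tau}\ge0.\]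
   Context: Standing hypotheses (S): $\rho_0\in\mathcal P_2(\mathbb R^d)$; $\mathbb H=L^2(\mathbb R^d;\rho_0)$ is the Hilbert space of $\rho_0$-square-integrable maps $\mathbb R^d\to\mathbb R^d$ with $\langle\xi_1,\xi_2\rangle_{\mathbb H}=\int\langle\xi_1,\xi_2\rangle d\rho_0$; $\phi:\mathcal P_2(\mathbb R^d)\to\mathbb R$ has lift $\phi^{\#}_{\rho_0}(\xi):=\phi(\xi_{\#}\rho_0)$ which is Fréchet differentiable on $\mathbb H$ (gradient $\nabla\phi^{\#}_{\rho_0}$), $\lambda$-convex on $\mathbb H$ for some $\lambda\in\mathbb R$ (i.e. $\phi^{\#}_{\rho_0}((1-t)\xi_1+t\xi_2)\le(1-t)\phi^{\#}_{\rho_0}(\xi_1)+t\phi^{\#}_{\rho_0}(\xi_2)-\frac\lambda2t(1-t)\|\xi_1-\xi_2\|_{\mathbb H}^2$), and $\inf_{\mathbb H}\phi^{\#}_{\rho_0}>-\infty$; the time step $\tau>0$ satisfies $\lambda/2+1/\tau>0$; $X_0^\tau\in\mathbb H$. Lagrangian trapezoidal scheme: $X_{n+1}^\tau$ is the (unique) minimizer over $\xi\in\mathbb H$ of $\tfrac12\phi^{\#}_{\rho_0}(\xi)+\tfrac12\langle\nabla\phi^{\#}_{\rho_0}(X_n^\tau),\xi\rangle_{\mathbb H}+\tfrac1{2\tau}\|\xi-X_n^\tau\|^2_{\mathbb H}$; equivalently $X_{n+1}^\tau=X_n^\tau-\frac\tau2\big(\nabla\phi^{\#}_{\rho_0}(X_{n+1}^\tau)+\nabla\phi^{\#}_{\rho_0}(X_n^\tau)\big)$.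 *)

From HB Require Import structures.
From mathcomp Require Import all_boot all_order all_algebra.
From mathcomp Require Import all_classical all_reals all_analysis.
Set Implicit Arguments. Unset Strict Implicit. Unset Printing Implicit Defensive.
Import Order.TTheory GRing.Theory Num.Theory.
Local Open Scope ring_scope.

Record is_inner_product (R : realType) (V : lmodType R) (ip : V -> V -> R) : Prop := {
  ip_sym : forall x y, ip x y = ip y x;
  ip_linear : forall (a : R) x y z, ip (a *: x + y) z = a * ip x z + ip y z;
  ip_pos : forall x, 0 <= ip x x;
  ip_def : forall x, ip x x = 0 -> x = 0 }.

Definition hnorm (R : realType) (V : lmodType R) (ip : V -> V -> R) (x : V) : R :=
  Num.sqrt (ip x x).

Definition hcomplete (R : realType) (V : lmodType R) (ip : V -> V -> R) : Prop :=
  forall u : nat -> V,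
    (forall e : R, 0 < e -> exists N : nat, forall m n : nat, (N <= m)%N -> (N <= n)%N ->
        hnorm ip (u m - u n) < e) ->
    exists l : V, forall e : R, 0 < e -> exists N : nat, forall n : nat, (N <= n)%N ->
        hnorm ip (u n - l) < e.

Definition hilbert (R : realType) (V : lmodType R) (ip : V -> V -> R) : Prop :=
  is_inner_product ip /\ hcomplete ip.

Definition frechet_gradient (R : realType) (V : lmodType R) (ip : V -> V -> R)
  (f : V -> R) (G : V -> V) : Prop :=
  forall x : V, forall e : R, 0 < e -> exists d : R, 0 < d /\
    forall h : V, hnorm ip h < d ->
      `| f (x + h) - f x - ip (G x) h | <= e * hnorm ip h.

Definition lambda_convex (R : realType) (V : lmodType R) (ip : V -> V -> R)
  (lam : R) (f : V -> R) : Prop :=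
  forall (x1 x2 : V) (t : R), 0 <= t <= 1 ->
    f ((1 - t) *: x1 + t *: x2) <=
      (1 - t) * f x1 + t * f x2 - lam / 2 * t * (1 - t) * hnorm ip (x1 - x2) ^+ 2.

Definition bounded_below (R : realType) (V : Type) (f : V -> R) : Prop :=
  exists m : R, forall x, m <= f x.

Definition hlipschitz (R : realType) (V : lmodType R) (ip : V -> V -> R)
  (L : R) (G : V -> V) : Prop :=
  forall x y, hnorm ip (G x - G y) <= L * hnorm ip (x - y).

Definition trap_functional (R : realType) (V : lmodType R) (ip : V -> V -> R)
  (f : V -> R) (G : V -> V) (tau : R) (Xn xi : V) : R :=
  f xi / 2 + ip (G Xn) xi / 2 + (2 * tau)^-1 * hnorm ip (xi - Xn) ^+ 2.

Definition trapezoidal_scheme (R : realType) (V : lmodType R) (ip : V -> V -> R)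
  (f : V -> R) (G : V -> V) (tau : R) (X : nat -> V) : Prop :=
  forall n : nat, forall xi : V,
    trap_functional ip f G tau (X n) (X n.+1) <= trap_functional ip f G tau (X n) xi.

Definition lam_tauL (R : realType) (lam tau L : R) : R :=
  ln (1 + lam * tau * (2 - L * tau)) / (2 * tau).

(* The minimiser X_{n+1} of the trapezoidal functional satisfies the
   Euler-Lagrange equation X_n - X_{n+1} = tau/2 (grad phi(X_{n+1}) + grad phi(X_n)).
   Write u = grad phi(X_{n+1}) and w = grad phi(X_n) - u.  Lam-convexity gives the
   gradient inequality at X_{n+1} and the lam-monotonicity of grad phi, and the
   Lipschitz bound gives |w| <= L |X_n - X_{n+1}|.  Through the Euler-Lagrange
   equation these become scalar inequalities in |u|^2, <u, w> and |w|^2, which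
   force <u, w> >= - L tau |u|^2 / 2; the energy estimate and the decay
   |u + w|^2 >= (1 + lam tau (2 - L tau)) |u|^2 then follow. *)

From HB Require Import structures.
From mathcomp Require Import all_boot all_order all_algebra.
From mathcomp Require Import all_classical all_reals all_analysis.
From mathcomp Require Import ring lra.
Import Order.TTheory GRing.Theory Num.Theory.
Set Implicit Arguments. Unset Strict Implicit.
Local Open Scope ring_scope.

Definition gateaux_gradient (R : realType) (V : lmodType R) (ip : V -> V -> R)
    (F : V -> R) (x g : V) : Prop :=
  forall v e, 0 < e -> exists2 t0, 0 < t0 &
    forall t, 0 < t < t0 -> `|F (x + t *: v) - F x - t * ip g v| <= e * t.

Lemma exists_pos_lt2 (R : realFieldType) (a b : R) :
  0 < a -> 0 < b -> exists t, [/\ 0 < t, t < a & t < b].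
Proof.
move=> a0 b0; exists (Num.min a b / 2).
have ma : Num.min a b <= a by rewrite ge_min lexx.
have mb : Num.min a b <= b by rewrite ge_min lexx orbT.
have : 0 < Num.min a b by rewrite lt_min a0 b0.
split; lra.
Qed.

Lemma trapezoidal_cross_bound (R : realFieldType) (a g p q : R) :
  0 <= a <= 2 -> 0 <= g -> 0 <= 2 * p + q -> 4 * q <= a ^+ 2 * (4 * g + 4 * p + q) ->
  - (a * g / 2) <= p.
Proof.
move=> /andP[a0 a2] g0 mono lip.
(* (4 + a^2) p >= -2 a^2 g >= -(a g / 2) (4 + a^2), the last step being a g (a - 2)^2 >= 0. *)
have a24 : 0 <= 4 - a ^+ 2 by rewrite expr2; nra.
have key : 0 <= 2 * a ^+ 2 * g + (4 + a ^+ 2) * p.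
  have : 0 <= (4 - a ^+ 2) * (2 * p + q) by rewrite mulr_ge0.
  move: lip; rewrite !expr2; nra.
have : 0 <= a * g * (a - 2) ^+ 2 by apply: mulr_ge0; [exact: mulr_ge0 | exact: sqr_ge0].
have : 0 < 4 + a ^+ 2 by rewrite expr2; nra.
move: key; rewrite !expr2; nra.
Qed.

(* The step estimate in the coordinates g = |u|^2, p = <u, w>, q = |w|^2, with
   u = grad phi (Y), w = grad phi (Z) - u and Z - Y = tau/2 (2u + w); the three
   hypotheses are the gradient inequality at Y, the lam-monotonicity of the
   gradient and its L-Lipschitz bound. *)
Lemma trapezoidal_step_scalar_bounds (R : realFieldType) (lam L tau g p q fY fZ : R) :
  0 <= lam -> 0 < tau -> 0 <= L * tau <= 1 ->
  0 <= g -> 0 <= q -> 0 <= 4 * g + 4 * p + q ->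
  fY + tau / 2 * (2 * g + p) + lam / 2 * ((tau / 2) ^+ 2 * (4 * g + 4 * p + q)) <= fZ ->
  lam * ((tau / 2) ^+ 2 * (4 * g + 4 * p + q)) <= tau / 2 * (2 * p + q) ->
  q <= L ^+ 2 * ((tau / 2) ^+ 2 * (4 * g + 4 * p + q)) ->
  fY + lam / 2 * ((tau / 2) ^+ 2 * (4 * g + 4 * p + q)) + tau * (1 - L * tau / 2) * g <= fZ
  /\ (1 + lam * tau * (2 - L * tau)) * g <= g + 2 * p + q.
Proof.
move=> lam0 tau0 /andP[a0 a1] g0 q0; set S := 4 * g + 4 * p + q => S0 energy mono lip.
have pq0 : 0 <= 2 * p + q.
  have : 0 <= lam * ((tau / 2) ^+ 2 * S) by rewrite mulr_ge0 // mulr_ge0 // sqr_ge0.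
  by move: mono; rewrite expr2; nra.
have lip' : 4 * q <= (L * tau) ^+ 2 * S.
  by move: lip; rewrite !expr2 -!mulrA; lra.
have cross : - (L * tau * g / 2) <= p.
  by apply: (trapezoidal_cross_bound (q := q)) => //; rewrite a0 /=; lra.
split.
  have : 0 <= tau * (L * tau) * g by rewrite mulr_ge0 // mulr_ge0 // ltW.
  by move: energy; nra.
have lamS : lam * tau / 2 * S <= 2 * p + q by move: mono; rewrite expr2; nra.
have S2 : 2 * (2 - L * tau) * g <= S by rewrite /S; nra.
have : 0 <= lam * tau / 2 by rewrite mulr_ge0 // mulr_ge0 // ltW.
by nra.
Qed.

Section InnerProduct.
Variables (R : realType) (V : lmodType R) (ip : V -> V -> R).
Hypothesis Hip : is_inner_product ip.

Lemma ipDl x y z : ip (x + y) z = ip x z + ip y z.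
Proof. by have := ip_linear Hip 1 x y z; rewrite scale1r mul1r. Qed.

Lemma ip0l z : ip 0 z = 0.
Proof. by have := ipDl 0 0 z; rewrite addr0; lra. Qed.

Lemma ipZl a x z : ip (a *: x) z = a * ip x z.
Proof. by have := ip_linear Hip a x 0 z; rewrite addr0 ip0l addr0. Qed.

Lemma ipNl x z : ip (- x) z = - ip x z.
Proof. by rewrite -scaleN1r ipZl mulN1r. Qed.

Lemma ipBl x y z : ip (x - y) z = ip x z - ip y z.
Proof. by rewrite ipDl ipNl. Qed.

Lemma ipDr x y z : ip z (x + y) = ip z x + ip z y.
Proof. by rewrite !(ip_sym Hip z) ipDl. Qed.

Lemma ipZr a x z : ip z (a *: x) = a * ip z x.
Proof. by rewrite !(ip_sym Hip z) ipZl. Qed.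

Lemma ipNr x z : ip z (- x) = - ip z x.
Proof. by rewrite !(ip_sym Hip z) ipNl. Qed.

Lemma ipN x : ip (- x) (- x) = ip x x.
Proof. by rewrite ipNl ipNr opprK. Qed.

Lemma ip_sqrD x y : ip (x + y) (x + y) = ip x x + 2 * ip x y + ip y y.
Proof. by rewrite ipDl !ipDr (ip_sym Hip y x); ring. Qed.

Lemma hnorm_sqr x : hnorm ip x ^+ 2 = ip x x.
Proof. by rewrite sqr_sqrtr // ip_pos. Qed.

Lemma hnorm_ge0 x : 0 <= hnorm ip x.
Proof. exact: sqrtr_ge0. Qed.

Lemma hnormZ a x : hnorm ip (a *: x) = `|a| * hnorm ip x.
Proof.
by rewrite /hnorm ipZl ipZr mulrA -expr2 sqrtrM ?sqr_ge0 // sqrtr_sqr.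
Qed.

Lemma frechet_gateaux f G x :
  frechet_gradient ip f G -> gateaux_gradient ip f x (G x).
Proof.
move=> fG v e e0; have v0 := hnorm_ge0 v.
have [d d0 fGd] : exists2 d, 0 < d & forall h, hnorm ip h < d ->
    `|f (x + h) - f x - ip (G x) h| <= e / (hnorm ip v + 1) * hnorm ip h.
  have [d [d0 fGd]] := fG x (e / (hnorm ip v + 1)) (divr_gt0 e0 (ltr_wpDl v0 ltr01)).
  by exists d.
exists (d / (hnorm ip v + 1)); first by rewrite divr_gt0 // ltr_wpDl.
move=> t /andP[t0 ltt]; rewrite -ipZr.
have tv : hnorm ip (t *: v) = t * hnorm ip v by rewrite hnormZ gtr0_norm.
apply: le_trans (fGd _ _) _; rewrite tv.
  by move: ltt; rewrite ltr_pdivlMr ?ltr_wpDl //; nra.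
by rewrite mulrAC ler_pdivrMr ?ltr_wpDl //; nra.
Qed.

Lemma gateauxD F1 F2 x g1 g2 :
  gateaux_gradient ip F1 x g1 -> gateaux_gradient ip F2 x g2 ->
  gateaux_gradient ip (fun y => F1 y + F2 y) x (g1 + g2).
Proof.
move=> dF1 dF2 v e e0; have e20 : 0 < e / 2 by rewrite divr_gt0.
have [t1 t10 dt1] := dF1 v _ e20; have [t2 t20 dt2] := dF2 v _ e20.
have [t0 [t00 t01 t02]] := exists_pos_lt2 t10 t20.
exists t0 => // t /andP[t0' ltt].
have := dt1 t; have := dt2 t; rewrite t0' /= (lt_trans ltt t01) (lt_trans ltt t02).
rewrite ipDl => /(_ isT) /ler_normlP[? ?] /(_ isT) /ler_normlP[? ?].
apply/ler_normlP; split; lra.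
Qed.

Lemma gateauxZ a F x g :
  gateaux_gradient ip F x g -> gateaux_gradient ip (fun y => a * F y) x (a *: g).
Proof.
move=> dF v e e0; have ea0 : 0 < e / (`|a| + 1) by rewrite divr_gt0 ?ltr_wpDl.
have [t0 t00 dt] := dF v _ ea0; exists t0 => // t tt0.
rewrite ipZl mulrCA -!mulrBr normrM.
apply: le_trans (ler_wpM2l (normr_ge0 a) (dt t tt0)) _.
have t0' : 0 < t by case/andP: tt0.
rewrite mulrA ler_pM2r // mulrCA ger_pMr // ler_pdivrMr ?ltr_wpDl //; lra.
Qed.

Lemma gateaux_ip a x : gateaux_gradient ip (ip a) x a.
Proof.
move=> v e e0; exists 1 => // t /andP[t0 _].
have -> : ip a (x + t *: v) - ip a x - t * ip a v = 0 by rewrite ipDr ipZr; ring.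
by rewrite normr0 mulr_ge0 // ltW.
Qed.

Lemma gateaux_sqr_dist c x :
  gateaux_gradient ip (fun y => hnorm ip (y - c) ^+ 2) x (2 *: (x - c)).
Proof.
move=> v e e0; have vv0 := ip_pos Hip v.
exists (e / (ip v v + 1)); first by rewrite divr_gt0 // ltr_wpDl.
move=> t /andP[t0 ltt].
have -> : x + t *: v - c = (x - c) + t *: v by rewrite addrAC.
rewrite !hnorm_sqr ip_sqrD !ipZl !ipZr.
have -> : ip (x - c) (x - c) + 2 * (t * ip (x - c) v) + t * (t * ip v v)
    - ip (x - c) (x - c) - t * (2 * ip (x - c) v) = t * (t * ip v v) by ring.
rewrite ger0_norm; last by rewrite !mulr_ge0 // ltW.
rewrite [e * t]mulrC ler_pM2l //.
by move: ltt; rewrite ltr_pdivlMr ?ltr_wpDl //; nra.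
Qed.

Lemma gateaux_min_eq0 F x g :
  (forall y, F x <= F y) -> gateaux_gradient ip F x g -> g = 0.
Proof.
move=> Fmin dF; apply: (ip_def Hip); apply/eqP; rewrite eq_le ip_pos // andbT.
rewrite leNgt; apply/negP => gg0.
have [t0 t00 dt] := dF (- g) _ (divr_gt0 gg0 (@ltr0Sn R 1)).
have [t [t0' ltt _]] := exists_pos_lt2 t00 t00.
have := dt t; rewrite t0' ltt ipNr => /(_ isT) /ler_normlP[_].
have := Fmin (x + t *: - g); nra.
Qed.

Lemma lambda_convex_gradient_ineq lam f G x y :
  frechet_gradient ip f G -> lambda_convex ip lam f ->
  f x + ip (G x) (y - x) + lam / 2 * hnorm ip (y - x) ^+ 2 <= f y.
Proof.
move=> fG fconv; set h := y - x; rewrite hnorm_sqr; set M := ip h h.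
have M0 : 0 <= M := ip_pos Hip h.
apply/ler_addgt0Pr => e e0.
have [t0 t00 dt] := frechet_gateaux x fG h (divr_gt0 e0 (@ltr0Sn R 1)).
have k0 : 0 < e / (`|lam| * M + 1) by rewrite divr_gt0 // ltr_wpDl ?mulr_ge0.
have [s [s0 st0 s1]] := exists_pos_lt2 t00 ltr01.
have [t [t0' ts tk]] := exists_pos_lt2 s0 k0.
have tM : t * (lam * M) <= e.
  move: tk; rewrite ltr_pdivlMr ?ltr_wpDl ?mulr_ge0 // => tk.
  have : lam * M <= `|lam| * M by rewrite ler_wpM2r // ler_norm.
  nra.
have := dt t; rewrite t0' (lt_trans ts st0) => /(_ isT) /ler_normlP[dtl _].
have := fconv x y t; rewrite ltW ?(ltW (lt_trans ts s1)) //=.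
have -> : (1 - t) *: x + t *: y = x + t *: h.
  by rewrite /h scalerBl scale1r scalerBr addrAC -addrA [t *: y - t *: x]addrC.
have -> : x - y = - h by rewrite opprB.
rewrite hnorm_sqr ipN -/M => conv.
rewrite -(ler_pM2l t0'); nra.
Qed.

Lemma lambda_convex_gradient_monotone lam f G x y :
  frechet_gradient ip f G -> lambda_convex ip lam f ->
  lam * hnorm ip (y - x) ^+ 2 <= ip (G y - G x) (y - x).
Proof.
move=> fG fconv; have := lambda_convex_gradient_ineq x y fG fconv.
have := lambda_convex_gradient_ineq y x fG fconv.
rewrite -opprB hnorm_sqr ipN -hnorm_sqr ipNr ipBl; lra.
Qed.

Lemma trapezoidal_minimizer_step f G tau Xn Y :
  frechet_gradient ip f G -> 0 < tau ->
  (forall xi, trap_functional ip f G tau Xn Y <= trap_functional ip f G tau Xn xi) ->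
  Xn - Y = (tau / 2) *: (G Y + G Xn).
Proof.
move=> fG tau0 Ymin.
have dF : gateaux_gradient ip (trap_functional ip f G tau Xn) Y
    (2^-1 *: G Y + (2^-1 *: G Xn + (2 * tau)^-1 *: (2 *: (Y - Xn)))).
  have -> : trap_functional ip f G tau Xn = fun xi => 2^-1 * f xi
      + (2^-1 * ip (G Xn) xi + (2 * tau)^-1 * hnorm ip (xi - Xn) ^+ 2).
    by apply: funext => xi; rewrite /trap_functional; ring.
  apply: gateauxD; first exact: gateauxZ (frechet_gateaux _ fG).
  by apply: gateauxD; apply: gateauxZ; [exact: gateaux_ip | exact: gateaux_sqr_dist].
move/eqP: (gateaux_min_eq0 Ymin dF); rewrite addrA addr_eq0 scalerA.
rewrite invfM mulrAC mulVf ?pnatr_eq0 // mul1r -scalerDr => /eqP E.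
rewrite -[Xn - Y](scalerKV (lt0r_neq0 tau0)) -opprB scalerN -E scalerA.
by rewrite mulrC.
Qed.

Lemma trapezoidal_step_estimate phi G lam L tau Y Z :
  frechet_gradient ip phi G -> lambda_convex ip lam phi -> hlipschitz ip L G ->
  0 <= lam -> 0 < tau -> 0 <= L * tau <= 1 ->
  Z - Y = (tau / 2) *: (G Y + G Z) ->
  phi Y + lam / 2 * hnorm ip (Z - Y) ^+ 2
    + tau * (1 - L * tau / 2) * hnorm ip (G Y) ^+ 2 <= phi Z
  /\ (1 + lam * tau * (2 - L * tau)) * hnorm ip (G Y) ^+ 2 <= hnorm ip (G Z) ^+ 2.
Proof.
move=> fG fconv GLip lam0 tau0 Ltau.
set u := G Y; set w := G Z - G Y.
have -> : G Z = u + w by rewrite addrC subrK.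
have -> : u + (u + w) = 2 *: u + w by rewrite scaler_nat mulr2n addrA.
move=> step; set g := ip u u; set p := ip u w; set q := ip w w.
have E1 : ip u (Z - Y) = tau / 2 * (2 * g + p) by rewrite step ipZr ipDr ipZr.
have E2 : hnorm ip (Z - Y) ^+ 2 = (tau / 2) ^+ 2 * (4 * g + 4 * p + q).
  by rewrite hnorm_sqr step ipZl ipZr ip_sqrD !ipZl !ipZr -/g -/p -/q; ring.
have E3 : ip w (Z - Y) = tau / 2 * (2 * p + q).
  by rewrite step ipZr ipDr ipZr (ip_sym Hip w u) -/p -/q; ring.
have S0 : 0 <= 4 * g + 4 * p + q.
  by have := ip_pos Hip (2 *: u + w); rewrite ip_sqrD !ipZl !ipZr -/g -/p -/q; lra.
have lip : q <= L ^+ 2 * ((tau / 2) ^+ 2 * (4 * g + 4 * p + q)).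
  rewrite -E2 -exprMn /q -hnorm_sqr ler_sqr ?nnegrE ?hnorm_ge0 //; first exact: GLip.
  exact: le_trans (hnorm_ge0 _) (GLip Z Y).
have B1 := lambda_convex_gradient_ineq Y Z fG fconv.
have mono := lambda_convex_gradient_monotone Y Z fG fconv.
rewrite E1 E2 in B1; rewrite E2 -/w E3 in mono.
rewrite E2 !hnorm_sqr ip_sqrD -/g -/p -/q.
exact: trapezoidal_step_scalar_bounds lam0 tau0 Ltau (ip_pos Hip u) (ip_pos Hip w) S0 B1 mono lip.
Qed.

End InnerProduct.

Lemma lam_tauL_ge0 (R : realType) (lam tau L : R) :
  0 < tau -> 0 <= lam * tau * (2 - L * tau) -> 0 <= lam_tauL lam tau L.
Proof.
move=> tau0 c0; rewrite /lam_tauL divr_ge0 //; last by rewrite mulr_ge0 // ltW.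
by rewrite ln_ge0 // lerDl.
Qed.

Lemma expR_lam_tauL (R : realType) (lam tau L : R) :
  0 < tau -> 0 < 1 + lam * tau * (2 - L * tau) ->
  expR (2 * lam_tauL lam tau L * tau) = 1 + lam * tau * (2 - L * tau).
Proof.
move=> tau0 c0; rewrite /lam_tauL.
have -> : 2 * (ln (1 + lam * tau * (2 - L * tau)) / (2 * tau)) * tau
    = ln (1 + lam * tau * (2 - L * tau)) by field; rewrite lt0r_neq0.
by rewrite lnK.
Qed.

Theorem mainTheorem17 (R : realType) (V : lmodType R) (ip : V -> V -> R)
  (phi : V -> R) (G : V -> V) (lam L tau : R) (X : nat -> V) :
  hilbert ip ->
  frechet_gradient ip phi G ->
  lambda_convex ip lam phi ->
  bounded_below phi ->
  0 < tau -> 0 < lam / 2 + tau^-1 ->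
  trapezoidal_scheme ip phi G tau X ->
  0 <= lam ->
  0 < L -> hlipschitz ip L G -> tau <= L^-1 ->
  forall n : nat,
    phi (X n.+1) + lam / 2 * hnorm ip (X n - X n.+1) ^+ 2
      + tau * (1 - L * tau / 2) * hnorm ip (G (X n.+1)) ^+ 2 <= phi (X n)
    /\ 0 <= lam_tauL lam tau L
    /\ expR (2 * lam_tauL lam tau L * tau) * hnorm ip (G (X n.+1)) ^+ 2
         <= hnorm ip (G (X n)) ^+ 2.
Proof.
(* Each X n.+1 is assumed to be a minimiser. *)
move=> [Hip _] fG fconv _ tau0 _ scheme lam0 L0 GLip tauL n.
have Ltau1 : L * tau <= 1 by rewrite -(mulfV (lt0r_neq0 L0)) ler_pM2l.
have Ltau : 0 <= L * tau <= 1 by rewrite mulr_ge0 ?(ltW L0) ?(ltW tau0).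
have step := trapezoidal_minimizer_step Hip fG tau0 (scheme n).
have [energy decay] := trapezoidal_step_estimate Hip fG fconv GLip lam0 tau0 Ltau step.
have c0 : 0 <= lam * tau * (2 - L * tau).
  by rewrite !mulr_ge0 ?(ltW tau0) // subr_ge0 (le_trans Ltau1) // ler1n.
split=> //; split; first exact: lam_tauL_ge0.
by rewrite expR_lam_tauL // ltr_wpDr.
Qed.
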